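(* For any $m$, $n\le m$ and $0<\rho<n$, there exists a code over $\mathrm{GF}(q^m)$ of length $n$ and rank covering radius $\rho$ whose cardinality gives $$K_{\mathrm R}(q^m,n,\rho)\le\left\lfloor\frac{1}{1-\log_{q^{mn}}\left(q^{mn}-V_\rho(q^m,n)\right)}\right\rfloor+1.$$
   Context: The rank $\mathrm{rk}(\mathbf x)$ of $\mathbf x\in\mathrm{GF}(q^m)^n$ is the maximum number of its coordinates linearly independent over $\mathrm{GF}(q)$, and $d_{\mathrm R}(\mathbf x,\mathbf y)=\mathrm{rk}(\mathbf x-\mathbf y)$. $K_{\mathrm R}(q^m,n,\rho)$ is the minimum cardinality of a code in $\mathrm{GF}(q^m)^n$ with rank covering radius $\rho$ (covering radius $=\max_{\mathbf x}\min_{\mathbf c\in C}d_{\mathrm R}(\mathbf x,\mathbf c)$). $V_\rho(q^m,n)=\sum_{u=0}^\rho{n\brack u}\alpha(m,u)$ with $\alpha(m,0)=1$, $\alpha(m,u)=\prod_{i=0}^{u-1}(q^m-q^i)$, ${n\brack u}=\alpha(n,u)/\alpha(u,u)$. *)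

From HB Require Import structures.
From mathcomp Require Import all_boot all_order all_algebra all_field.
From Stdlib Require Reals.
From Stdlib Require ZArith.
Set Implicit Arguments. Unset Strict Implicit. Unset Printing Implicit Defensive.
Import GRing.Theory.

Local Open Scope ring_scope.

(* GF(q^m) is modelled as a field extension L of K = GF(q) (K a finite field);
   q = #|K|, m = \dim {:L} (dimension of L over K). *)

Definition rk (K : finFieldType) (L : fieldExtType K) (n : nat) (x : 'rV[L]_n) : nat :=
  \max_(S : {set 'I_n} | free [seq x ord0 i | i <- enum S]) #|S|.

Definition dR (K : finFieldType) (L : fieldExtType K) (n : nat) (x y : 'rV[L]_n) : nat :=
  rk (x - y).

(* C has rank covering radius exactly rho:
   max_x min_{c in C} dR(x,c) = rho. *)
Definition has_rank_covering_radius (K : finFieldType) (L : fieldExtType K) (n : nat)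
  (C : seq 'rV[L]_n) (rho : nat) : Prop :=
  (forall x : 'rV[L]_n, exists2 c, c \in C & (dR x c <= rho)%N) /\
  (exists x : 'rV[L]_n, forall c, c \in C -> (rho <= dR x c)%N).

Definition alpha (q m u : nat) : nat := \prod_(i < u) (q ^ m - q ^ i)%N.

(* Gaussian binomial [n brack u] = alpha(n,u)/alpha(u,u) (exact division) *)
Definition gbin (q n u : nat) : nat := (alpha q n u %/ alpha q u u)%N.

Definition Vrank (q m n rho : nat) : nat :=
  (\sum_(u < rho.+1) gbin q n u * alpha q m u)%N.

Definition cover_bound (q m n rho : nat) : BinNums.Z :=
  let Nq := expn q (muln m n) in
  BinInt.Z.add (R_Ifp.Int_part (Rdefinitions.Rdiv Rdefinitions.R1 (Rdefinitions.Rminus Rdefinitions.R1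
       (Rdefinitions.Rdiv (Rpower.ln (Raxioms.INR (subn Nq (Vrank q m n rho))))
                          (Rpower.ln (Raxioms.INR Nq))))) ) (BinNums.Zpos BinNums.xH).

From Stdlib Require Import Reals ZArith Lra Lia.
From HB Require Import structures.
From mathcomp Require Import all_boot all_order all_algebra all_field.
Set Implicit Arguments. Unset Strict Implicit. Unset Printing Implicit Defensive.
Import GRing.Theory.

(* Let N = q^(mn) and V = V_rho(q^m, n).  The number of n-tuples over GF(q^m)
   whose coordinates span a u-dimensional GF(q)-space is [n u] alpha(m, u), and
   the rank of a vector is at most the dimension of the span of its
   coordinates, so every rank ball of radius rho has at least V elements.
   Counting pairs (c, x) of a family c of k words and a word x at distance
   > rho from all of them gives at most N (N - V)^k such pairs, and for the k
   of cover_bound this is < N^k, so some family of k words covers the space.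
   To make the covering radius exactly rho, reveal the coordinates of the
   family one at a time starting from the zero code: each step changes every
   distance by at most one and the zero code has covering radius n > rho, so
   the first covering stage has covering radius exactly rho. *)

Section LogBound.
Local Open Scope R_scope.

Lemma INR_expn (a k : nat) : INR (a ^ k)%N = INR a ^ k.
Proof. by elim: k => [|k IH] //; rewrite expnS -multE mult_INR IH. Qed.

Lemma Int_part_succ_gt (t : R) : 0 <= t ->
  Z.le 0 (Z.add (Int_part t) 1) /\ t < INR (Z.to_nat (Z.add (Int_part t) 1)).
Proof.
move=> t0; have [lo hi] := base_Int_part t.
have pos : Z.lt 0 (Z.add (Int_part t) 1) by apply: lt_IZR; rewrite plus_IZR; lra.
split; first lia.
rewrite INR_IZR_INZ Z2Nat.id; last lia.
rewrite plus_IZR; lra.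
Qed.

Lemma pow_lt_of_log_ratio (a b : R) (k : nat) : 1 <= b -> b < a ->
  ln a / (ln a - ln b) < INR k -> a * b ^ k < a ^ k.
Proof.
move=> b1 ba kgt.
have lnab : ln b < ln a by apply: ln_increasing; lra.
have key : ln a < INR k * (ln a - ln b).
  have := Rmult_lt_compat_r (ln a - ln b) _ _ ltac:(lra) kgt.
  by have -> : ln a / (ln a - ln b) * (ln a - ln b) = ln a by field; lra.
have a0 : 0 < a by lra.
have b0 : 0 < b by lra.
have ak : 0 < a ^ k by apply: pow_lt.
have bk : 0 < b ^ k by apply: pow_lt.
apply: ln_lt_inv => //; first exact: Rmult_lt_0_compat.
rewrite ln_mult // !ln_pow //; lra.
Qed.

Lemma cover_bound_spec (q m n rho : nat) :
  let N := (q ^ (m * n))%N in let V := Vrank q m n rho in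
  (0 < V)%N -> (V < N)%N ->
  let k := Z.to_nat (cover_bound q m n rho) in
  Z.le 0 (cover_bound q m n rho) /\ (N * (N - V) ^ k < N ^ k)%N.
Proof.
move=> N V V0 VN k.
have b1 : 1 <= INR (N - V) by apply: (le_INR 1); apply/leP; rewrite subn_gt0.
have ba : INR (N - V) < INR N.
  by apply: lt_INR; apply/ltP; rewrite ltn_subrL V0 (leq_trans V0 (ltnW VN)).
have lna : 0 < ln (INR N) by rewrite -ln_1; apply: ln_increasing; lra.
have lnab : ln (INR (N - V)) < ln (INR N) by apply: ln_increasing; lra.
set t := ln (INR N) / (ln (INR N) - ln (INR (N - V))).
have tE : cover_bound q m n rho = Z.add (Int_part t) 1.
  rewrite /cover_bound -/N -/V /t; do 2 f_equal; rewrite /Rdiv; field; lra.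
have t0 : 0 <= t by apply: Rle_mult_inv_pos; lra.
have [bnd0 tk] := Int_part_succ_gt t0.
rewrite /k tE; split=> //.
have := pow_lt_of_log_ratio b1 ba tk.
by rewrite -!INR_expn -mult_INR => /INR_lt/ltP.
Qed.

End LogBound.

(* Only now: these tactics shadow Stdlib's [field] on [R]. *)
From mathcomp Require Import zify ring.

Fixpoint qbinom (q n u : nat) : nat :=
  match n, u with
  | _, 0 => 1
  | 0, _.+1 => 0
  | n'.+1, u'.+1 => q ^ u'.+1 * qbinom q n' u'.+1 + qbinom q n' u'
  end.

Lemma qbinomn0 q n : qbinom q n 0 = 1.
Proof. by case: n. Qed.

Lemma alpha0 q m : alpha q m 0 = 1.
Proof. by rewrite /alpha big_ord0. Qed.

Lemma alphaS q m u : alpha q m u.+1 = alpha q m u * (q ^ m - q ^ u).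
Proof. by rewrite /alpha big_ord_recr. Qed.

Lemma alphaSS q m u : 0 < q ->
  alpha q m.+1 u.+1 = (q ^ m.+1 - 1) * q ^ u * alpha q m u.
Proof.
move=> q0; rewrite /alpha big_ord_recl expn0 -mulnA; congr (_ * _).
elim: u => [|u IH]; first by rewrite !big_ord0.
rewrite !big_ord_recr /= IH /bump add1n !expnS -mulnBr; ring.
Qed.

Lemma alpha_small q m u : m < u -> alpha q m u = 0.
Proof. by move=> mu; rewrite /alpha (bigD1 (Ordinal mu)) //= subnn mul0n. Qed.

Lemma alpha_gt0 q m u : 1 < q -> u <= m -> 0 < alpha q m u.
Proof.
move=> q1 um; rewrite /alpha prodn_gt0 // => i.
by rewrite subn_gt0 ltn_exp2l // (leq_trans (ltn_ord i)).
Qed.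

Lemma qbinom_alpha q n u : 1 < q -> qbinom q n u * alpha q u u = alpha q n u.
Proof.
move=> q1; have q0 : 0 < q by lia.
elim: n u => [|n IH] [|u]; rewrite /= ?alpha0 ?muln1 //.
  by rewrite mul0n alpha_small.
rewrite mulnDl -mulnA IH alphaSS // mulnCA IH alphaS alphaSS //.
have [un|nu] := leqP u n; last by rewrite (alpha_small q nu) !muln0.
have : q ^ u <= q ^ n by rewrite leq_exp2l.
have : 0 < q ^ u by rewrite expn_gt0 q0.
rewrite !expnS; set a := q ^ u; set b := q ^ n => a0 ab.
have -> : q * b - 1 = q * (b - a) + (q * a - 1).
  have qab : q * a <= q * b by rewrite leq_mul2l ab orbT.
  have qa0 : 0 < q * a by rewrite muln_gt0 q0.
  by rewrite mulnBr; lia.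
ring.
Qed.

Lemma gbin_qbinom q n u : 1 < q -> gbin q n u = qbinom q n u.
Proof.
by move=> q1; rewrite /gbin -(qbinom_alpha n u q1) mulnK // alpha_gt0.
Qed.

Lemma dim_span_cons (K : fieldType) (vT : vectType K) (a : vT) (s : seq vT) :
  \dim <<a :: s>>%VS = \dim <<s>>%VS + (a \notin <<s>>%VS).
Proof.
have [in_s|notin_s] := boolP (a \in <<s>>%VS).
  by rewrite span_cons addn0 (addv_idPr _) // -memvE.
have bP := vbasisP <<s>>%VS; set b := vbasis _ in bP.
have free_ab : free (a :: b) by rewrite free_cons (span_basis bP) notin_s (basis_free bP).
rewrite addn1 span_cons -(span_basis bP) -span_cons (eqnP free_ab) /=.
by rewrite (span_basis bP) size_tuple.
Qed.

Lemma big_tuple_cons (R : Type) (idx : R) (op : Monoid.com_law idx)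
    (T : finType) n (F : n.+1.-tuple T -> R) :
  \big[op/idx]_(t : n.+1.-tuple T) F t =
  \big[op/idx]_(t : n.-tuple T) \big[op/idx]_(a : T) F [tuple of a :: t].
Proof.
rewrite exchange_big pair_big /=.
rewrite (reindex (fun p : T * n.-tuple T => [tuple of p.1 :: p.2])) //=.
exists (fun t : n.+1.-tuple T => (thead t, [tuple of behead t])).
  by move=> [a t] _ /=; rewrite theadE; congr (_, _); apply: val_inj.
by move=> t _; rewrite [RHS]tuple_eta.
Qed.

Lemma sum_nat_pred (T : finType) (P : pred T) : \sum_(x : T) P x = #|P|.
Proof.
by rewrite -sum1_card [RHS]big_mkcond; apply: eq_bigr => x _; rewrite unfold_in; case: (P x).
Qed.

Section SpanCount.
Variables (K : finFieldType) (vT : vectType K).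
Local Notation V := (finvect_type vT).
Local Notation q := #|K|.
Local Notation m := (\dim {: V}).

Lemma card_finvect : #|V| = q ^ m.
Proof.
by rewrite -card_vspace; apply: eq_card => v; rewrite memvf.
Qed.

Definition n_span_dim n u := \sum_(t : n.-tuple V) (\dim <<t>>%VS == u).

Lemma sum_dim_span_cons (t : seq V) u :
  \sum_(a : V) (\dim <<a :: t>>%VS == u) =
  (\dim <<t>>%VS == u) * q ^ \dim <<t>>%VS
  + ((\dim <<t>>%VS).+1 == u) * (q ^ m - q ^ \dim <<t>>%VS).
Proof.
rewrite (bigID (mem <<t>>%VS)) /=; congr (_ + _).
  rewrite (eq_bigr (fun=> nat_of_bool (\dim <<t>>%VS == u))); last first.
    by move=> a in_t; rewrite dim_span_cons in_t addn0.
  by rewrite sum_nat_const mulnC -card_vspace.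
rewrite (eq_bigr (fun=> nat_of_bool ((\dim <<t>>%VS).+1 == u))); last first.
  by move=> a /negbTE notin_t; rewrite dim_span_cons notin_t addn1.
rewrite sum_nat_const mulnC -card_finvect -card_vspace.
by rewrite -(cardC (mem <<t>>%VS)) addKn.
Qed.

Lemma n_span_dim0 u : n_span_dim 0 u = (u == 0).
Proof.
rewrite /n_span_dim (eq_bigr (fun=> nat_of_bool (u == 0))).
  by rewrite sum_nat_const card_tuple expn0 mul1n.
by move=> t _; rewrite tuple0 span_nil dimv0 eq_sym.
Qed.

Lemma n_span_dimS n u : n_span_dim n.+1 u =
  n_span_dim n u * q ^ u + (if u is u'.+1 then n_span_dim n u' * (q ^ m - q ^ u') else 0).
Proof.
rewrite /n_span_dim big_tuple_cons.
under eq_bigr do rewrite sum_dim_span_cons.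
rewrite big_split /= big_distrl /=; congr (_ + _).
  by apply: eq_bigr => t _; case: eqP => [->|].
case: u => [|u]; first by rewrite big1.
by rewrite big_distrl /=; apply: eq_bigr => t _; rewrite eqSS; case: eqP => [->|].
Qed.

Lemma n_span_dimE n u : n_span_dim n u = qbinom q n u * alpha q m u.
Proof.
elim: n u => [|n IH] [|u]; rewrite ?n_span_dim0 ?alpha0 //.
  by rewrite n_span_dimS IH qbinomn0 alpha0 expn0 !muln1 addn0.
by rewrite n_span_dimS !IH /= alphaS; ring.
Qed.

End SpanCount.

Lemma free_mask (K : fieldType) (vT : vectType K) (X : seq vT) (b : bitseq) :
  free X -> free (mask b X).
Proof.
elim: X b => [|x X IH] [|[] b] //=; rewrite ?nil_free // free_cons => /andP[xX fX].
  rewrite free_cons IH // andbT; apply: contra xX.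
  by apply/subvP/sub_span => y /mem_mask.
exact: IH.
Qed.

Section Rank.
Variables (K : finFieldType) (L : fieldExtType K).

Lemma rk_le_agree_off n (S : {set 'I_n}) (y z : 'rV[L]_n) :
  (forall j, j \notin S -> y ord0 j = z ord0 j) -> rk y <= rk z + #|S|.
Proof.
move=> yz; apply/bigmax_leqP => T freeT.
have free_TS : free [seq z ord0 i | i <- enum (T :\: S)].
  have enumD : enum (T :\: S) = filter (mem (~: S)) (enum T).
    by rewrite /enum_mem -filter_predI; apply: eq_filter => i; rewrite /= !inE andbC.
  have -> : [seq z ord0 i | i <- enum (T :\: S)] = [seq y ord0 i | i <- enum (T :\: S)].
    by apply/eq_in_map => i; rewrite mem_enum inE => /andP[/yz].
  by rewrite enumD filter_mask map_mask free_mask.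
rewrite -(cardsID S T) addnC leq_add ?subset_leq_card ?subsetIr //.
exact: leq_bigmax_cond.
Qed.

Lemma rk_le_dim_span n (y : 'rV[L]_n) :
  rk y <= \dim <<[seq y ord0 i | i <- enum 'I_n]>>%VS.
Proof.
apply/bigmax_leqP => S freeS.
rewrite cardE -(size_map (y ord0)) -(eqnP freeS); apply/dimvS/sub_span.
by move=> a /mapP[i _ ->]; rewrite map_f ?mem_enum.
Qed.

Definition basis_row n : 'rV[L]_n := \row_(i < n) nth 0%R (vbasis {: L}) i.

Lemma rk_basis_row n : n <= \dim {: L} -> n <= rk (basis_row n).
Proof.
move=> nm; rewrite -[X in X <= _](card_ord n) -cardsT; apply: leq_bigmax_cond.
have -> : [seq basis_row n ord0 i | i <- enum [set: 'I_n]] = take n (vbasis {: L}).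
  rewrite enum_setT -enumT -(map_nth_iota0 0%R) ?size_tuple // -val_enum_ord -map_comp.
  by apply: eq_map => i /=; rewrite mxE.
have := basis_free (vbasisP {: L}).
by rewrite -[X in free X -> _](cat_take_drop n) => /catl_free.
Qed.

End Rank.

Lemma sum_ord_eq (d r : nat) : \sum_(u < r.+1) (d == u) = (d <= r).
Proof.
elim: r => [|r IH]; first by rewrite big_ord1 leqn0.
rewrite big_ord_recr /= IH [d <= r.+1]leq_eqVlt ltnS.
by case: eqP => [->|]; rewrite ?ltnn ?addn0.
Qed.

Section RankBall.
Variables (K : finFieldType) (L : fieldExtType K).
Local Notation FL := (finvect_type L).
Local Notation q := #|K|.
Local Notation m := (\dim {: FL}).

Lemma card_rV n : #|{: 'rV[FL]_n}| = q ^ (m * n).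
Proof. by rewrite card_mx mul1n card_finvect -expnM. Qed.

Lemma Vrank_le_card_rball0 n r :
  Vrank q m n r <= #|[pred y : 'rV[FL]_n | rk y <= r]|.
Proof.
have q1 : 1 < q by apply: card_finNzRing_gt1.
rewrite /Vrank (eq_bigr (fun u : 'I_r.+1 => n_span_dim L n u)) => [|u _]; last first.
  by rewrite gbin_qbinom // n_span_dimE.
rewrite /n_span_dim exchange_big /=; under eq_bigr do rewrite sum_ord_eq.
rewrite -sum_nat_pred (reindex (fun y : 'rV[FL]_n => [tuple y ord0 i | i < n])) /=.
  apply: leq_sum => y _.
  by case: (leqP (\dim _) r) => // dim_le; rewrite (leq_trans (rk_le_dim_span y) dim_le).
exists (fun t : n.-tuple FL => (\row_(i < n) tnth t i)%R).
  by move=> y _; apply/rowP => i; rewrite mxE tnth_mktuple ord1.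
by move=> t _; apply: eq_from_tnth => i; rewrite tnth_mktuple mxE.
Qed.

Lemma card_rball_translate n r (x : 'rV[FL]_n) :
  #|[pred y : 'rV[FL]_n | rk (x - y)%R <= r]| = #|[pred y : 'rV[FL]_n | rk y <= r]|.
Proof.
rewrite -!sum_nat_pred (reindex (fun y : 'rV[FL]_n => x - y)%R) /=.
  by apply: eq_bigr => y _; rewrite opprB addrC subrK.
by exists (fun y : 'rV[FL]_n => x - y)%R => y _; rewrite opprB addrC subrK.
Qed.

Lemma card_rball0_lt n r : n <= m -> r < n ->
  #|[pred y : 'rV[FL]_n | rk y <= r]| < q ^ (m * n).
Proof.
move=> nm rn; rewrite -card_rV -(cardC [pred y : 'rV[FL]_n | rk y <= r]) -addn1 leq_add2l.
apply/card_gt0P; exists (basis_row L n); rewrite !inE -ltnNge.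
exact: leq_trans rn (rk_basis_row nm).
Qed.

End RankBall.

Lemma leq_exp2rW m n e : m <= n -> m ^ e <= n ^ e.
Proof. by move=> mn; elim: e => // e IH; rewrite !expnS leq_mul. Qed.

Lemma exists_covering_ffun (T : finType) (near : rel T) (B k : nat) :
  (forall x, B <= #|[pred y | near x y]|) ->
  #|T| * (#|T| - B) ^ k < #|T| ^ k ->
  exists c : {ffun 'I_k -> T}, forall x, exists i, near x (c i).
Proof.
move=> ballB gap.
have [c /forallP cov | uncovered] :=
  pickP (fun c : {ffun 'I_k -> T} => [forall x, [exists i, near x (c i)]]).
  by exists c => x; have /existsP := cov x.
suff : #|T| ^ k <= #|T| * (#|T| - B) ^ k by rewrite leqNgt gap.
have card_avoid x :
    #|[pred c : {ffun 'I_k -> T} | [forall i, ~~ near x (c i)]]| =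
    (#|T| - #|[pred y | near x y]|) ^ k.
  rewrite -(cardC [pred y | near x y]) addKn -[k in RHS]card_ord -card_ffun_on.
  by apply: eq_card => c; rewrite !inE.
rewrite -[k in #|T| ^ k]card_ord -card_ffun -sum1_card.
apply: (@leq_trans (\sum_(c : {ffun 'I_k -> T}) \sum_(x : T)
          [forall i, ~~ near x (c i)])).
  apply: leq_sum => c _; have /negbT/forallPn[x] := uncovered c.
  by rewrite negb_exists => avoid; rewrite (bigD1 x) //= avoid.
rewrite exchange_big /= -sum_nat_const; apply: leq_sum => x _.
rewrite sum_nat_pred card_avoid; apply/leq_exp2rW/leq_sub2l/ballB.
Qed.

Lemma exact_radius_on_path (T I : finType) (d : nat -> T -> I -> nat) (r t1 : nat) :
  (forall t x i, d t x i <= (d t.+1 x i).+1) ->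
  (exists x, forall i, r < d 0 x i) ->
  (forall x, exists i, d t1 x i <= r) ->
  exists t, (forall x, exists i, d t x i <= r) /\ (exists x, forall i, r <= d t x i).
Proof.
move=> step [x0 far0] cov1.
pose covers t := [forall x, [exists i, d t x i <= r]].
have covers_t1 : covers t1.
  by apply/forallP => x; have [i le_r] := cov1 x; apply/existsP; exists i.
have [[|t] cov_t min_t] := ex_minnP (ex_intro covers t1 covers_t1).
  by have /existsP[i] := forallP cov_t x0; rewrite leqNgt far0.
have /forallPn[x /existsPn far] : ~~ covers t by apply/negP => /min_t; rewrite ltnn.
exists t.+1; split.
  by move=> y; have /existsP[i le_r] := forallP cov_t y; exists i.
by exists x => i; rewrite -ltnS (leq_trans _ (step t x i)) // ltnNge far.
Qed.

Section ExactRadius.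
Variables (K : finFieldType) (L : fieldExtType K).
Local Notation FL := (finvect_type L).
Variables (n k : nat) (c : {ffun 'I_k -> 'rV[FL]_n}).

(* The first t coordinates of the concatenation c 0 ++ c 1 ++ ... are kept,
   the others are set to zero. *)
Definition trunc_code (t : nat) (i : 'I_k) : 'rV[FL]_n :=
  \row_j (if i * n + j < t then c i ord0 j else 0%R).

Lemma trunc_code0 i : trunc_code 0 i = 0%R.
Proof. by apply/rowP => j; rewrite !mxE. Qed.

Lemma trunc_code_full i : trunc_code (k * n) i = c i.
Proof.
apply/rowP => j; rewrite mxE ord1.
by have := ltn_ord i; have := ltn_ord j; case: ifP => //; nia.
Qed.

Lemma rk_sub_trunc_codeS t (x : 'rV[FL]_n) i :
  rk (x - trunc_code t i)%R <= (rk (x - trunc_code t.+1 i)%R).+1.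
Proof.
pose S := [set j : 'I_n | i * n + j == t].
have agree j : j \notin S -> (x - trunc_code t i)%R ord0 j = (x - trunc_code t.+1 i)%R ord0 j.
  by rewrite inE => /negbTE neq_t; rewrite !mxE ltnS [(_ + _ <= t)%N]leq_eqVlt neq_t.
have S_le1 : #|S| <= 1.
  by apply/card_le1_eqP => j1 j2; rewrite !inE => /eqP e1 /eqP e2; apply: ord_inj; lia.
by rewrite (leq_trans (rk_le_agree_off agree)) // -[X in _ <= X]addn1 leq_add2l.
Qed.

Lemma exists_code_exact_radius r : n <= \dim {: FL} -> r < n ->
  (forall x, exists i, rk (x - c i)%R <= r) ->
  exists C : seq 'rV[FL]_n,
    [/\ uniq C, size C <= k & has_rank_covering_radius C r].
Proof.
move=> nm rn cov.
have far0 : exists x, forall i, r < rk (x - trunc_code 0 i)%R.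
  exists (basis_row L n) => i; rewrite trunc_code0 subr0.
  exact: leq_trans rn (rk_basis_row nm).
have cov1 x : exists i, rk (x - trunc_code (k * n) i)%R <= r.
  by have [i le_r] := cov x; exists i; rewrite trunc_code_full.
have [t [cov_t [x far_t]]] := exact_radius_on_path rk_sub_trunc_codeS far0 cov1.
exists (undup [seq trunc_code t i | i <- enum 'I_k]); split.
- exact: undup_uniq.
- by rewrite (leq_trans (size_undup _)) // size_map size_enum_ord.
split; last by exists x => y; rewrite mem_undup => /mapP[i _ ->]; apply: far_t.
move=> y; have [i le_r] := cov_t y; exists (trunc_code t i) => //.
by rewrite mem_undup map_f ?mem_enum.
Qed.

End ExactRadius.

Theorem proposition11 (K : finFieldType) (L : fieldExtType K) (n rho : nat) :
  (n <= \dim {: L})%N -> (0 < rho)%N -> (rho < n)%N ->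
  exists C : seq 'rV[L]_n,
    [/\ uniq C, has_rank_covering_radius C rho &
        BinInt.Z.le (BinInt.Z.of_nat (size C)) (cover_bound #|K| (\dim {: L}) n rho)].
Proof.
move=> nm _ rhon.
pose FL := finvect_type L.
have q1 : 1 < #|K| by apply: card_finNzRing_gt1.
have V_gt0 : 0 < Vrank #|K| (\dim {: L}) n rho.
  by rewrite /Vrank big_ord_recl gbin_qbinom // qbinomn0 alpha0 leq_addr.
have V_le_ball (x : 'rV[FL]_n) :
    Vrank #|K| (\dim {: L}) n rho <= #|[pred y : 'rV[FL]_n | rk (x - y)%R <= rho]|.
  by rewrite card_rball_translate Vrank_le_card_rball0.
have V_lt_N : Vrank #|K| (\dim {: L}) n rho < #|K| ^ (\dim {: L} * n).
  exact: leq_ltn_trans (Vrank_le_card_rball0 L n rho) (card_rball0_lt (L := L) nm rhon).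
have [bound_ge0 gap] := cover_bound_spec V_gt0 V_lt_N.
rewrite -(card_rV L n) in gap.
have [c cov] := exists_covering_ffun V_le_ball gap.
have [C [uniq_C size_C radius_C]] := exists_code_exact_radius nm rhon cov.
exists C; split=> //.
by rewrite -(Z2Nat.id _ bound_ge0); apply/Nat2Z.inj_le/leP.
Qed.
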